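(* For each $k\ge0$, a linear basis for the $k$-th level $C^k$ of the coradical filtration of $\mathcal{Y}Sym$ is $\{M_t : t\in\mathcal{Y}^0\sqcup\mathcal{Y}^1\sqcup\cdots\sqcup\mathcal{Y}^k\}$. In particular, a linear basis of the space of primitive elements of $\mathcal{Y}Sym$ is $\{M_t: t \text{ progressive}\}$.
   Context: $\mathcal{Y}_n$ is the set of rooted planar binary trees with $n$ internal nodes; $\mathcal{Y}_0=\{|\}$. $s\vee t$ is the tree with left subtree $s$, right subtree $t$ at the root; each $t\ne|$ is uniquely $t_l\vee t_r$. The Tamari order on $\mathcal{Y}_n$ is generated by replacing a subtree $(a\vee b)\vee c$ by the larger $a\vee(b\vee c)$. $s\backslash t$: $|\backslash t=t$, $s\backslash t=s_l\vee(s_r\backslash t)$. A tree $t\neq|$ is progressive if $t_r=|$; each $t\ne|$ decomposes uniquely as $t_1\backslash\cdots\backslash t_k$ with $t_i$ progressive; $\mathcal{Y}^0=\{|\}$ and $\mathcal{Y}^k$ ($k\ge1$) is the set of trees with exactly $k$ progressive components. $\mathcal{Y}Sym$ is the graded connected Hopf algebra over $\mathbb{Q}$ with basis $\{F_t\}$; with leaves of $t\in\mathcal{Y}_n$ numbered $0,\dots,n$, splitting at leaf $i$, $t\to(t_0,t_1)$, is defined recursively by $|\to(|,|)$ and, for $t=t_l\vee t_r$: if leaf $i$ is in $t_l$ with $t_l\to(a,b)$ then $t\to(a,b\vee t_r)$, if in $t_r$ with $t_r\to(c,d)$ then $t\to(t_l\vee c,d)$; $\Delta(F_t)=\sum_{i=0}^nF_{t_0}\otimes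 F_{t_1}$. $M_t=\sum_{t\le s}\mu_{\mathcal{Y}_n}(t,s)F_s$. Coradical filtration of a graded connected coalgebra $C$: $C^0$ is the degree-0 part, and $C^k=(\Delta^{(k)})^{-1}\big(\sum_{i+j=k}C^{\otimes i}\otimes C^0\otimes C^{\otimes j}\big)$, where $\Delta^{(k)}:C\to C^{\otimes(k+1)}$ is the iterated coproduct; primitive elements are $x$ with $\Delta(x)=x\otimes1+1\otimes x$, and $C^1=C^0\oplus P(C)$. *)

From HB Require Import structures.
From mathcomp Require Import all_boot all_order all_algebra.
Set Implicit Arguments. Unset Strict Implicit. Unset Printing Implicit Defensive.
Import Order.TTheory GRing.Theory Num.Theory.
Local Open Scope ring_scope.

(** Rooted planar binary trees: Leaf = | , Node s t = s \/ t. *)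
Inductive tree := Leaf | Node of tree & tree.

Fixpoint tree_eqb (s t : tree) : bool :=
  match s, t with
  | Leaf, Leaf => true
  | Node a b, Node c d => tree_eqb a c && tree_eqb b d
  | _, _ => false
  end.

Lemma tree_eqP : Equality.axiom tree_eqb.
Proof.
elim=> [|a IHa b IHb] [|c d] /=; try by constructor.
case: (IHa c) => [->|Hac]; last by constructor; case.
case: (IHb d) => [->|Hbd]; last by constructor; case.
by constructor.
Qed.

HB.instance Definition _ := hasDecEq.Build tree tree_eqP.

(** number of internal nodes; Y_n = trees with [tsize t = n] *)
Fixpoint tsize (t : tree) : nat :=
  if t is Node l r then (tsize l + tsize r).+1 else 0%N.

Fixpoint trees_hgt (m : nat) : seq tree :=
  if m is m'.+1 then
    Leaf :: [seq Node a b | a <- trees_hgt m', b <- trees_hgt m']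
  else [:: Leaf].

(** enumeration of Y_n (a tree with n internal nodes has height <= n) *)
Definition trees (n : nat) : seq tree :=
  [seq t <- trees_hgt n | tsize t == n].

Definition trees_upto (N : nat) : seq tree :=
  flatten [seq trees n | n <- iota 0 N.+1].

Fixpoint rot1 (t : tree) : seq tree :=
  match t with
  | Leaf => [::]
  | Node l r =>
      (if l is Node a b then [:: Node a (Node b r)] else [::])
      ++ [seq Node l' r | l' <- rot1 l] ++ [seq Node l r' | r' <- rot1 r]
  end.

(** Rotations preserve
    the number of internal nodes, so all trees reachable from [s] lie in
    Y_(tsize s), and it suffices to iterate #|Y_n| times. *)
Definition rot_step (l : seq tree) : seq tree := undup (l ++ flatten (map rot1 l)).
Definition tam_le (s t : tree) : bool :=
  t \in iter (size (trees (tsize s))) rot_step [:: s].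

(** Moebius function of the Tamari poset Y_n:
    mu(t,t) = 1, mu(t,s) = - sum_{t <= u < s} mu(t,u) for t < s, 0 otherwise.
    Fuel #|Y_n| bounds the length of chains. *)
Fixpoint muf (f : nat) (t s : tree) : rat :=
  if t == s then 1 else
  if ~~ tam_le t s then 0 else
  match f with
  | 0 => 0
  | f'.+1 => - \sum_(u <- trees (tsize t) | tam_le t u && (u != s) && tam_le u s)
                 muf f' t u
  end.
Definition mu (t s : tree) : rat := muf (size (trees (tsize t))) t s.

(** Elements of YSym are represented by their coefficient functions
    x : tree -> rat in the basis (F_t), subject to finite support. *)
Definition finsupp (x : tree -> rat) : Prop :=
  exists N : nat, forall t, (N < tsize t)%N -> x t = 0.

Definition Mbasis (t : tree) : tree -> rat :=
  fun s => if (tsize s == tsize t) && tam_le t s then mu t s else 0.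

(** Splitting of t at each leaf i = 0..n, listed in order of i. *)
Fixpoint splits (t : tree) : seq (tree * tree) :=
  match t with
  | Leaf => [:: (Leaf, Leaf)]
  | Node l r =>
      [seq (p.1, Node p.2 r) | p <- splits l] ++ [seq (Node l p.1, p.2) | p <- splits r]
  end.

(** Iterated coproduct of a basis element F_t, as a multiset (list) of
    (k+1)-tuples of trees: Delta^(0) = id, Delta^(k+1) = (id (x) Delta^(k)) o Delta. *)
Fixpoint deltaF (k : nat) (t : tree) : seq (seq tree) :=
  if k is k'.+1 then
    flatten [seq [seq p.1 :: u | u <- deltaF k' p.2] | p <- splits t]
  else [:: [:: t]].

(** Delta^(k) x in C^{(x)(k+1)}, as a coefficient function on (k+1)-tuples
    of trees (the coefficient of F_{u_0} (x) ... (x) F_{u_k}).  The coproduct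
    preserves degree, so only trees of total degree contribute. *)
Definition delta (k : nat) (x : tree -> rat) (u : seq tree) : rat :=
  \sum_(t <- trees (sumn (map tsize u))) x t * (count_mem u (deltaF k t))%:R.

(** C^k: Delta^(k) x lies in sum_{i+j=k} C^{(x)i} (x) C^0 (x) C^{(x)j}, where
    C^0 = span(F_|).  In the tensor basis this sum of subspaces consists
    exactly of the tensors supported on tuples having some entry equal to |. *)
Definition in_coradical (k : nat) (x : tree -> rat) : Prop :=
  finsupp x /\
  forall u : seq tree, size u = k.+1 -> delta k x u != 0 -> has (pred1 Leaf) u.

Definition primitive (x : tree -> rat) : Prop :=
  finsupp x /\
  forall a b : tree,
    delta 1 x [:: a; b] = x a * (b == Leaf)%:R + (a == Leaf)%:R * x b.

Fixpoint under (s t : tree) : tree :=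
  if s is Node sl sr then Node sl (under sr t) else t.

Definition progressive (t : tree) : bool :=
  if t is Node _ Leaf then true else false.

Definition in_Yk (k : nat) (t : tree) : Prop :=
  exists ps : seq tree,
    [/\ size ps = k, all progressive ps & foldr under Leaf ps = t].

(** finite linear combination sum_t c t * f t, where c vanishes on degrees > N *)
Definition lincomb (N : nat) (c : tree -> rat) (f : tree -> tree -> rat) : tree -> rat :=
  fun s => \sum_(t <- trees_upto N) c t * f t s.

Definition is_basis (P : (tree -> rat) -> Prop) (I : tree -> Prop)
    (f : tree -> tree -> rat) : Prop :=
  [/\ (forall t, I t -> P (f t)),
      (forall (N : nat) (c : tree -> rat),
          (forall t, (N < tsize t)%N -> c t = 0) ->
          (forall t, c t != 0 -> I t) ->
          lincomb N c f =1 (fun _ => 0) -> forall t, c t = 0)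
    & (forall x, P x -> exists (N : nat) (c : tree -> rat),
          [/\ (forall t, (N < tsize t)%N -> c t = 0),
              (forall t, c t != 0 -> I t)
            & x =1 lincomb N c f])].

From mathcomp Require Import all_boot all_algebra zify.
Set Implicit Arguments. Unset Strict Implicit. Unset Printing Implicit Defensive.
Import GRing.Theory.

(* Write [Mcoord x t = sum_(s <= t) x_s] for the coefficient of [M_t] in [x].  Splitting a
   tree at a leaf is a Galois connection for the Tamari order: [t <= a \ b] iff the two halves
   of [t] split at leaf [tsize a] lie below [a] and [b].  Hence summing [Delta^(k) x] over all
   tuples below [(u_0, ..., u_k)] gives [Mcoord x (u_0 \ ... \ u_k)], i.e. in the M-basis the
   iterated coproduct deconcatenates progressive components.  If [t] has at most [k]
   components it is not a product of [k + 1] trees different from [|], so [Delta^(k) M_t]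
   vanishes on leafless tuples and [M_t] lies in [C^k].  Conversely, for [x] in [C^k] and [t]
   with more than [k] components, cutting [t] into [k + 1] nontrivial pieces shows
   [Mcoord x t = 0].  Primitive elements are the elements of [C^1] vanishing at [|]. *)

Inductive tamari : tree -> tree -> Prop :=
| tamari_refl t : tamari t t
| tamari_step t u s : u \in rot1 t -> tamari u s -> tamari t s.

(* Strictly increased by every rotation, which gives antisymmetry of the Tamari order. *)
Fixpoint rot_weight (t : tree) : nat :=
  if t is Node l r then rot_weight l + rot_weight r + tsize r else 0.

Lemma rot1_tsize t u : u \in rot1 t -> tsize u = tsize t.
Proof.
elim: t u => [|l IHl r IHr] u //=; rewrite !mem_cat => /or3P [H|H|H].
- by case: l IHl H => // a b _; rewrite inE => /eqP -> /=; lia.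
- by case/mapP: H => l' /IHl H ->/=; rewrite H.
- by case/mapP: H => r' /IHr H ->/=; rewrite H.
Qed.

Lemma rot1_weight t u : u \in rot1 t -> rot_weight t < rot_weight u.
Proof.
elim: t u => [|l IHl r IHr] u //=; rewrite !mem_cat => /or3P [H|H|H].
- by case: l IHl H => // a b _; rewrite inE => /eqP -> /=; lia.
- by case/mapP: H => l' /IHl H ->/=; lia.
- by case/mapP: H => r' H ->/=; have := IHr _ H; rewrite (rot1_tsize H); lia.
Qed.

Lemma tamari_trans a b c : tamari a b -> tamari b c -> tamari a c.
Proof. by elim=> // t u s H _ IH /IH; apply: tamari_step. Qed.

Lemma tamari_rot1 t u : u \in rot1 t -> tamari t u.
Proof. by move=> H; apply: tamari_step H (tamari_refl _). Qed.

Lemma tamari_tsize t s : tamari t s -> tsize t = tsize s.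
Proof. by elim=> // t0 u s0 /rot1_tsize ->. Qed.

Lemma tamari_weight t s : tamari t s -> t <> s -> rot_weight t < rot_weight s.
Proof.
elim=> // t0 u s0 /rot1_weight Htu _ IH _.
by case: (eqVneq u s0) => [<- //|/eqP /IH]; lia.
Qed.

Lemma tamari_weight_le t s : tamari t s -> rot_weight t <= rot_weight s.
Proof. by move=> H; case: (eqVneq t s) => [-> //|/eqP /(tamari_weight H)/ltnW]. Qed.

Lemma tamari_anti t s : tamari t s -> tamari s t -> t = s.
Proof.
move=> Hts Hst; case: (eqVneq t s) => [//|/eqP ne].
by have := tamari_weight Hts ne; have := tamari_weight_le Hst; lia.
Qed.

Lemma tamari_nodel l l' r : tamari l l' -> tamari (Node l r) (Node l' r).
Proof.
elim=> [t|t u s H _ IH]; first exact: tamari_refl.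
apply: tamari_step IH; rewrite /= !mem_cat; apply/or3P/Or32.
by apply/mapP; exists u.
Qed.

Lemma tamari_noder l r r' : tamari r r' -> tamari (Node l r) (Node l r').
Proof.
elim=> [t|t u s H _ IH]; first exact: tamari_refl.
apply: tamari_step IH; rewrite /= !mem_cat; apply/or3P/Or33.
by apply/mapP; exists u.
Qed.

Lemma tamari_rot a b c : tamari (Node (Node a b) c) (Node a (Node b c)).
Proof. by apply: tamari_rot1; rewrite /= inE eqxx. Qed.

Fixpoint height (t : tree) : nat :=
  if t is Node l r then (maxn (height l) (height r)).+1 else 0.

Lemma height_tsize t : height t <= tsize t.
Proof. by elim: t => //= l IHl r IHr; lia. Qed.

Lemma mem_trees_hgt m t : (t \in trees_hgt m) = (height t <= m).
Proof.
elim: m t => [|m IH] [|l r] //=; rewrite inE /=; apply/allpairsP/idP.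
- by case=> [[a b]] /= [Ha Hb [-> ->]]; move: Ha Hb; rewrite !IH; lia.
- by move=> H; exists (l, r); rewrite /= !IH; split=> //; lia.
Qed.

Lemma trees_hgt_uniq m : uniq (trees_hgt m).
Proof.
elim: m => //= m IH; apply/andP; split; first by apply/allpairsP => [[[a b] /= []]].
by apply: allpairs_uniq => // [[a b] [c d]] _ _ /= [-> ->].
Qed.

Lemma mem_trees n t : (t \in trees n) = (tsize t == n).
Proof.
rewrite mem_filter mem_trees_hgt; case: eqP => //= <-; exact: height_tsize.
Qed.

Lemma trees_uniq n : uniq (trees n).
Proof. exact/filter_uniq/trees_hgt_uniq. Qed.

Lemma mem_trees_upto N t : (t \in trees_upto N) = (tsize t <= N).
Proof.
apply/flattenP/idP.
- by case=> s /mapP [n]; rewrite mem_iota => Hn ->; rewrite mem_trees => /eqP ->; lia.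
- move=> H; exists (trees (tsize t)); last by rewrite mem_trees.
  by apply/mapP; exists (tsize t) => //; rewrite mem_iota; lia.
Qed.

Lemma trees_upto_uniq N : uniq (trees_upto N).
Proof.
rewrite /trees_upto; elim: N.+1 0 => [|m IH] j //=.
rewrite cat_uniq trees_uniq IH /= andbT; apply/hasPn => t /flattenP [s /mapP [i]].
by rewrite mem_iota => Hi -> ; rewrite !mem_trees => /eqP ->; apply/negP => /eqP; lia.
Qed.

Section SaturatingIteration.
Variables (T : eqType) (f : seq T -> seq T) (A : seq T).
Hypothesis f_incr : forall B, {subset B <= f B}.
Hypothesis f_mono : forall B C, {subset B <= C} -> {subset f B <= f C}.

Lemma iter_incr m k : {subset iter m f A <= iter (k + m) f A}.
Proof.
move=> x; rewrite iterD; elim: k => // k IH /IH; exact: f_incr.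
Qed.

Lemma iter_stable m : {subset iter m.+1 f A <= iter m f A} ->
  forall k, {subset iter (k + m) f A <= iter m f A}.
Proof.
move=> Hm; elim=> // k IH x; rewrite addSn /= => /(f_mono IH); exact: Hm.
Qed.

(* Each non-stable step adds a new element, so within the finite [U] the
   iteration stabilises after at most [size U] steps. *)
Lemma iter_saturate (U : seq T) :
  (forall m, uniq (iter m f A)) -> (forall m, {subset iter m f A <= U}) ->
  forall m, {subset iter m f A <= iter (size U) f A}.
Proof.
move=> uniq_iter sub_U.
have grow m : m <= size (iter m f A) \/
    exists2 m0, m0 < m & {subset iter m0.+1 f A <= iter m0 f A}.
  elim: m => [|m [IH|[m0 lt_m0 st_m0]]]; [by left | | by right; exists m0 => //; lia].
  have [/(uniq_min_size (uniq_iter m) (@f_incr (iter m f A))) [_ eqA]|lt_size] :=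
    leqP (size (iter m.+1 f A)) (size (iter m f A)).
    by right; exists m => // x; rewrite -eqA.
  by left; lia.
have [|[m0 lt_m0 st_m0]] := grow (size U).+1.
  by have := uniq_leq_size (uniq_iter _) (sub_U (size U).+1); lia.
have sub_m0 : {subset iter m0 f A <= iter (size U) f A}.
  by move=> x /(iter_incr (size U - m0)); rewrite subnK //; lia.
move=> m x Hx; apply: sub_m0; have [le_m|le_m0] := leqP m m0.
  by move: Hx => /(iter_incr (m0 - m)); rewrite subnK.
by move: Hx; rewrite -(subnK (ltnW le_m0)); apply: iter_stable.
Qed.

End SaturatingIteration.

Lemma rot_step_incr A : {subset A <= rot_step A}.
Proof. by move=> x Hx; rewrite mem_undup mem_cat Hx. Qed.

Lemma rot_step_mono A B : {subset A <= B} -> {subset rot_step A <= rot_step B}.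
Proof.
move=> sAB x; rewrite !mem_undup !mem_cat => /orP [/sAB -> //|/flattenP [_ /mapP [y Hy ->] Hx]].
by apply/orP; right; apply/flattenP; exists (rot1 y); rewrite // map_f ?sAB.
Qed.

Lemma mem_iter_rot_step s m t :
  t \in iter m rot_step [:: s] -> tamari s t /\ tsize t = tsize s.
Proof.
elim: m t => [|m IH] t /=; first by rewrite inE => /eqP ->; split=> //; apply: tamari_refl.
rewrite mem_undup mem_cat => /orP [/IH //|/flattenP [_ /mapP [y /IH [Hsy Hy] ->] Ht]].
by split; [apply: tamari_trans Hsy (tamari_rot1 Ht) | rewrite (rot1_tsize Ht)].
Qed.

Lemma tamari_iter_rot_step s t u m : tamari t u ->
  t \in iter m rot_step [:: s] -> exists k, u \in iter (k + m) rot_step [:: s].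
Proof.
move=> Htu; elim: Htu m => [t0 m Ht0|t0 v u0 Hv _ IH m Ht0]; first by exists 0.
have [|k Hk] := IH m.+1.
  rewrite /= mem_undup mem_cat; apply/orP; right.
  by apply/flattenP; exists (rot1 t0); rewrite ?map_f.
by exists k.+1; rewrite addSnnS.
Qed.

Lemma iter_rot_step_uniq s m : uniq (iter m rot_step [:: s]).
Proof. by case: m => //= m; apply: undup_uniq. Qed.

Lemma tam_leP s t : reflect (tamari s t) (tam_le s t).
Proof.
apply: (iffP idP); first by case/mem_iter_rot_step.
move=> Hst; have [k] := @tamari_iter_rot_step s s t 0 Hst (mem_head _ _).
apply: iter_saturate; [exact: rot_step_incr | exact: rot_step_mono | exact: iter_rot_step_uniq |].
by move=> m x /mem_iter_rot_step [_ Hx]; rewrite mem_trees Hx.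
Qed.

Lemma tam_le_tsize s t : tam_le s t -> tsize s = tsize t.
Proof. by move/tam_leP/tamari_tsize. Qed.

Lemma tam_le_refl t : tam_le t t.
Proof. exact/tam_leP/tamari_refl. Qed.

Lemma tam_le_trans a b c : tam_le a b -> tam_le b c -> tam_le a c.
Proof. by move=> /tam_leP Hab /tam_leP Hbc; apply/tam_leP/(tamari_trans Hab). Qed.

Lemma tam_le_anti a b : tam_le a b -> tam_le b a -> a = b.
Proof. by move=> /tam_leP Hab /tam_leP; apply: tamari_anti. Qed.

Lemma count_lt_sub (T : eqType) (a b : pred T) (s : seq T) x :
  subpred a b -> x \in s -> b x -> ~~ a x -> count a s < count b s.
Proof.
move=> sab; elim: s => [//|y s IH] /=; rewrite inE => /orP [/eqP <-|Hx] bx ax.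
  by rewrite (negbTE ax) bx add1n ltnS sub_count.
have := IH Hx bx ax; have [/sab -> /=|_] := boolP (a y); first lia.
by case: (b y) => /=; lia.
Qed.

Definition interval_size (t s : tree) : nat :=
  count (fun v => tam_le t v && (v != s) && tam_le v s) (trees (tsize t)).

Lemma interval_size_lt t u s :
  tam_le t u -> u != s -> tam_le u s -> interval_size t u < interval_size t s.
Proof.
move=> Htu Hus Hus'; apply: (count_lt_sub (x := u)); last 2 first.
- by rewrite Htu Hus Hus'.
- by rewrite eqxx andbF.
- move=> v /andP [/andP [Htv Hvu] Hvu']; rewrite Htv (tam_le_trans Hvu' Hus') /= andbT.
  by apply: contra Hus => /eqP Evs; move: Hvu'; rewrite Evs => /(tam_le_anti Hus') ->.
- by rewrite mem_trees (tam_le_tsize Htu).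
Qed.

Lemma interval_size_bound t s :
  tsize s = tsize t -> interval_size t s < size (trees (tsize t)).
Proof.
move=> Hs; rewrite -(count_predT (trees _)) (count_lt_sub (x := s)) //.
- by rewrite mem_trees Hs.
- by rewrite eqxx andbF.
Qed.

Section MoebiusInversion.
Local Open Scope ring_scope.

Lemma muf_stable f g t s :
  (interval_size t s < f)%N -> (f <= g)%N -> muf f t s = muf g t s.
Proof.
elim: f g s => [|f IH] [|g] s //= Hf Hg.
case: eqP => // _; case: (tam_le t s) => //=; congr (- _).
apply: eq_bigr => u /andP [/andP [Htu Hus] Hus']; apply: IH => //.
by have := interval_size_lt Htu Hus Hus'; lia.
Qed.

Lemma mu_refl t : mu t t = 1.
Proof. by rewrite /mu; case: (size _) => [|n] /=; rewrite eqxx. Qed.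

Lemma mu_notle t s : ~~ tam_le t s -> mu t s = 0.
Proof.
move=> nts; rewrite /mu; case: (size _) => [|n] /=; case: eqP => [Ets|_]; rewrite ?nts //.
all: by move: nts; rewrite Ets tam_le_refl.
Qed.

Lemma mu_rec t s : t != s -> tam_le t s ->
  mu t s = - \sum_(u <- trees (tsize t) | tam_le t u && (u != s) && tam_le u s) mu t u.
Proof.
move=> ne le; have := interval_size_bound (esym (tam_le_tsize le)).
rewrite {1}/mu; case E: (size (trees (tsize t))) => [|f] // Hb.
rewrite /= (negbTE ne) le /=; congr (- _); apply: eq_bigr => u /andP [/andP [Htu Hus] Hus'].
rewrite /mu E; apply: muf_stable => //.
by have := interval_size_lt Htu Hus Hus'; lia.
Qed.

Lemma mu_zeta t s : tsize s = tsize t ->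
  \sum_(u <- trees (tsize t)) mu t u * (tam_le u s)%:R = (t == s)%:R.
Proof.
move=> Hs; have Ht : t \in trees (tsize t) by rewrite mem_trees.
have Hs' : s \in trees (tsize t) by rewrite mem_trees Hs.
have [<-|ne] := eqVneq t s.
  rewrite (bigD1_seq t) ?trees_uniq //= mu_refl tam_le_refl mul1r big1 ?addr0 // => u ut.
  have [Htu|/mu_notle ->] := boolP (tam_le t u); last by rewrite mul0r.
  have [Hut|] := boolP (tam_le u t); last by rewrite mulr0.
  by move: ut; rewrite (tam_le_anti Htu Hut) eqxx.
have [le|nle] := boolP (tam_le t s); last first.
  rewrite big1 // => u _; have [Htu|/mu_notle ->] := boolP (tam_le t u); last by rewrite mul0r.
  have [Hus|] := boolP (tam_le u s); last by rewrite mulr0.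
  by move: nle; rewrite (tam_le_trans Htu Hus).
rewrite (bigD1_seq s) ?trees_uniq //= tam_le_refl mulr1 (mu_rec ne le) addrC.
apply/eqP; rewrite subr_eq0; apply/eqP.
rewrite big_mkcond [in RHS]big_mkcond; apply: eq_bigr => u _.
have [->|ne2] /= := eqVneq u s; first by rewrite andbF.
have [Htu|/mu_notle ->] /= := boolP (tam_le t u); last by rewrite mul0r.
by case: (tam_le u s); rewrite ?mulr1 ?mulr0.
Qed.

(* A one-sided inverse of a square matrix is two-sided. *)
Lemma zeta_mu n t s : tsize t = n -> tsize s = n ->
  \sum_(u <- trees n) (tam_le t u)%:R * mu u s = (t == s)%:R.
Proof.
move=> Ht Hs; set Y := trees n; set m := size Y.
pose Mu : 'M[rat]_m := \matrix_(i, j) mu (nth Leaf Y i) (nth Leaf Y j).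
pose Zeta : 'M[rat]_m := \matrix_(i, j) (tam_le (nth Leaf Y i) (nth Leaf Y j))%:R.
have uY : uniq Y := trees_uniq n.
have sY (i : 'I_m) : tsize (nth Leaf Y i) = n by apply/eqP; rewrite -mem_trees mem_nth.
have MuZeta : Mu *m Zeta = 1%:M.
  apply/matrixP => i j; rewrite !mxE.
  have -> : (i == j) = (nat_of_ord i == nat_of_ord j) by [].
  rewrite -(nth_uniq Leaf (ltn_ord i) (ltn_ord j) uY).
  rewrite -(@mu_zeta (nth Leaf Y i) (nth Leaf Y j) (etrans (sY j) (esym (sY i)))).
  by rewrite sY -/Y (big_nth Leaf) big_mkord; apply: eq_bigr => k _; rewrite !mxE.
have Hti : (index t Y < m)%N by rewrite index_mem mem_trees Ht.
have Hsi : (index s Y < m)%N by rewrite index_mem mem_trees Hs.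
move/matrixP: (mulmx1C MuZeta) => /(_ (Ordinal Hti) (Ordinal Hsi)); rewrite !mxE /=.
rewrite (big_nth Leaf) big_mkord -/m => E.
have -> : (t == s) = (index t Y == index s Y).
  by rewrite -(nth_uniq Leaf Hti Hsi uY) !nth_index ?mem_trees ?Ht ?Hs.
by rewrite -E; apply: eq_bigr => k _; rewrite !mxE !nth_index ?mem_trees ?Ht ?Hs.
Qed.

End MoebiusInversion.

Fixpoint split_at (i : nat) (t : tree) : tree * tree :=
  match t with
  | Leaf => (Leaf, Leaf)
  | Node l r =>
      if i <= tsize l then ((split_at i l).1, Node (split_at i l).2 r)
      else (Node l (split_at (i - (tsize l).+1) r).1, (split_at (i - (tsize l).+1) r).2)
  end.

Lemma splitsE t : splits t = [seq split_at i t | i <- iota 0 (tsize t).+1].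
Proof.
elim: t => [//|l IHl r IHr]; rewrite [splits _]/= [tsize _]/=.
have -> : (tsize l + tsize r).+2 = (tsize l).+1 + (tsize r).+1 by lia.
rewrite iotaD map_cat IHl IHr -!map_comp; congr (_ ++ _).
  by apply/eq_in_map => i; rewrite mem_iota /= => Hi; rewrite ifT //; lia.
rewrite -[0 + _]addn0 iotaDl -map_comp.
apply/eq_in_map => i _ /=; rewrite ifF; last lia.
by rewrite addKn.
Qed.

Lemma tsize_split_at i t : i <= tsize t ->
  tsize (split_at i t).1 = i /\ tsize (split_at i t).2 = tsize t - i.
Proof.
elim: t i => [|l IHl r IHr] i /=; first by split; lia.
move=> Hi; case: ifP => Hil /=; first by case: (IHl i Hil) => -> ->; split; lia.
by have [|-> ->] := IHr (i - (tsize l).+1); [lia | split; lia].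
Qed.

Lemma tsize_under a b : tsize (under a b) = tsize a + tsize b.
Proof. by elim: a => //= l _ r ->; lia. Qed.

Lemma under_Leaf a : under a Leaf = a.
Proof. by elim: a => //= l _ r ->. Qed.

Lemma split_at0 t : split_at 0 t = (Leaf, t).
Proof. by elim: t => //= l -> r _. Qed.

Lemma split_at_under a b : split_at (tsize a) (under a b) = (a, b).
Proof.
elim: a => [|al _ ar IH] /=; first exact: split_at0.
by rewrite ifF ?subSS ?addKn ?IH //; lia.
Qed.

Lemma split_at_tsize t : split_at (tsize t) t = (t, Leaf).
Proof. by rewrite -{2}[t]under_Leaf split_at_under. Qed.

Lemma tamari_split_at_rot1 t u i : u \in rot1 t ->
  tamari (split_at i t).1 (split_at i u).1 /\ tamari (split_at i t).2 (split_at i u).2.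
Proof.
elim: t u i => [|l IHl r IHr] u i //=; rewrite !mem_cat => /or3P [H|H|H].
- case: l IHl H => // a b _; rewrite inE => /eqP -> /=.
  have [Hia|Hai] := leqP i (tsize a).
    by rewrite ifT; [split; [apply: tamari_refl | apply: tamari_rot] | lia].
  have [Hib|Hbi] /= := leqP i (tsize a + tsize b).+1.
    by rewrite ifT; [split; apply: tamari_refl | lia].
  rewrite ifF; last lia.
  have -> : i - (tsize a).+1 - (tsize b).+1 = i - (tsize a + tsize b).+2 by lia.
  by split; [apply: tamari_rot | apply: tamari_refl].
- case/mapP: H => l' Hl -> /=; rewrite (rot1_tsize Hl); case: ifP => _ /=.
    by have [H1 H2] := IHl _ i Hl; split=> //; apply: tamari_nodel.
  by split; [apply/tamari_nodel/tamari_rot1 | apply: tamari_refl].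
- case/mapP: H => r' Hr -> /=; case: ifP => _ /=.
    by split; [apply: tamari_refl | apply/tamari_noder/tamari_rot1].
  by have [H1 H2] := IHr _ (i - (tsize l).+1) Hr; split=> //; apply: tamari_noder.
Qed.

Lemma tamari_split_at t u i : tamari t u ->
  tamari (split_at i t).1 (split_at i u).1 /\ tamari (split_at i t).2 (split_at i u).2.
Proof.
elim=> [s|a b c Hab _ [IH1 IH2]]; first by split; apply: tamari_refl.
have [H1 H2] := tamari_split_at_rot1 i Hab.
by split; [apply: tamari_trans H1 IH1 | apply: tamari_trans H2 IH2].
Qed.

Lemma tamari_node_under x y r : tamari (Node (under x y) r) (under x (Node y r)).
Proof.
elim: x => [|xl _ xr IH] /=; first exact: tamari_refl.
exact: tamari_trans (tamari_rot _ _ _) (tamari_noder _ IH).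
Qed.

Lemma tamari_under_split_at t i : tamari t (under (split_at i t).1 (split_at i t).2).
Proof.
elim: t i => [|l IHl r IHr] i /=; first exact: tamari_refl.
case: ifP => _ /=; last exact: tamari_noder.
exact: tamari_trans (tamari_nodel _ (IHl i)) (tamari_node_under _ _ _).
Qed.

Lemma tamari_underr a b b' : tamari b b' -> tamari (under a b) (under a b').
Proof. by elim: a => //= l _ r IH Hb; apply/tamari_noder/IH. Qed.

Lemma tamari_underl_rot1 a a' b : a' \in rot1 a -> tamari (under a b) (under a' b).
Proof.
elim: a a' => [|l IHl r IHr] a' //=; rewrite !mem_cat => /or3P [H|H|H].
- by case: l IHl H => // x y _; rewrite inE => /eqP -> /=; apply: tamari_rot.
- by case/mapP: H => l' Hl -> /=; apply/tamari_nodel/tamari_rot1.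
- by case/mapP: H => r' Hr -> /=; apply/tamari_noder/IHr.
Qed.

Lemma tamari_underl a a' b : tamari a a' -> tamari (under a b) (under a' b).
Proof.
elim=> [s|x y z Hxy _ IH]; first exact: tamari_refl.
exact: tamari_trans (tamari_underl_rot1 _ Hxy) IH.
Qed.

Lemma tam_le_under t a b :
  tam_le t (under a b) =
  tam_le (split_at (tsize a) t).1 a && tam_le (split_at (tsize a) t).2 b.
Proof.
apply/tam_leP/andP.
- by move=> /(tamari_split_at (tsize a)); rewrite split_at_under => -[H1 H2]; split; apply/tam_leP.
- case=> /tam_leP H1 /tam_leP H2; apply: tamari_trans (tamari_under_split_at t (tsize a)) _.
  exact: tamari_trans (tamari_underl _ H1) (tamari_underr _ H2).
Qed.

Lemma count_pred_at (T : eqType) (P : pred T) (s : seq T) j :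
  uniq s -> {in s, forall i, P i -> i = j} -> count P s = ((j \in s) && P j).
Proof.
elim: s => [//|x s IH] /= /andP [xs us] HP.
rewrite IH //; last by move=> i Hi; apply: HP; rewrite inE Hi orbT.
rewrite inE; have [<-|ne] /= := eqVneq x j; first by rewrite (negbTE xs); case: (P x).
suff -> : P x = false by [].
by apply/negP => /(HP x (mem_head _ _)) /eqP; rewrite (negbTE ne).
Qed.

Lemma count_splits t a b :
  count (fun p => tam_le p.1 a && tam_le p.2 b) (splits t) = tam_le t (under a b).
Proof.
rewrite splitsE count_map (count_pred_at (j := tsize a)) ?iota_uniq //; last first.
  move=> i; rewrite mem_iota add0n => Hi /= /andP [/tam_le_tsize <- _].
  by case: (@tsize_split_at i t); first lia.
rewrite mem_iota add0n /= -tam_le_under.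
case: ltnP => //= H; case: (boolP (tam_le t _)) => // /tam_le_tsize; rewrite tsize_under; lia.
Qed.

Definition under_seq (u : seq tree) : tree := foldr under Leaf u.

Lemma tsize_under_seq u : tsize (under_seq u) = sumn (map tsize u).
Proof. by elim: u => //= a u <-; rewrite tsize_under. Qed.

Lemma count_deltaF k t u : size u = k.+1 ->
  count (fun w => all2 tam_le w u) (deltaF k t) = tam_le t (under_seq u).
Proof.
elim: k t u => [|k IH] t [|u0 u] //=.
  by case: u => //= _; rewrite andbT addn0 under_Leaf.
case=> Hu; rewrite count_flatten -map_comp -count_splits -sumn_count.
congr sumn; apply/eq_map => p /=; rewrite count_map.
rewrite (@eq_count _ _ (fun w => tam_le p.1 u0 && all2 tam_le w u)) //.
by case: (tam_le p.1 u0); rewrite /= ?count_pred0 // -(IH p.2 u Hu).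
Qed.

Fixpoint lower_tuples (u : seq tree) : seq (seq tree) :=
  if u is a :: u' then
    [seq b :: w | b <- [seq b <- trees (tsize a) | tam_le b a], w <- lower_tuples u']
  else [:: [::]].

Lemma mem_lower_tuples u w : (w \in lower_tuples u) = all2 tam_le w u.
Proof.
elim: u w => [|a u IH] [|b w] //=; first by apply/negbTE/negP => /allpairsP [[c v] [_ _ //]].
apply/allpairsP/idP => [[[c v]] /= [] | /andP [Hba Hwu]].
  by rewrite mem_filter IH => /andP [Hca _] Hvu [-> ->]; rewrite Hca.
by exists (b, w); rewrite /= mem_filter IH Hba Hwu mem_trees (tam_le_tsize Hba) eqxx.
Qed.

Lemma lower_tuples_uniq u : uniq (lower_tuples u).
Proof.
elim: u => //= a u IH; apply: allpairs_uniq => //; first exact/filter_uniq/trees_uniq.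
by move=> [b w] [c v] _ _ /= [-> ->].
Qed.

Lemma sum_count_mem (T : eqType) (S L : seq T) : uniq S ->
  \sum_(y <- S) count_mem y L = count (mem S) L.
Proof.
move=> uS; elim: L => [|x L IH] /=; first by rewrite big1.
rewrite big_split /= IH; congr (_ + _).
rewrite -(count_uniq_mem x uS) -sum1_count [RHS]big_mkcond.
by apply: eq_bigr => y _; rewrite /= eq_sym; case: (x == y).
Qed.

Fixpoint ncomps (t : tree) : nat := if t is Node _ r then (ncomps r).+1 else 0.

Lemma in_YkP j t : in_Yk j t <-> ncomps t = j.
Proof.
split.
  case=> ps [<- + <-]; elim: ps => //= p ps IH /andP [Hp /IH <-].
  by case: p Hp => // l [].
elim: t j => [|l _ r IH] j /= <-; first by exists [::].
have [ps [Hs Hp Hf]] := IH _ erefl.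
by exists (Node l Leaf :: ps); rewrite /= Hs Hp Hf.
Qed.

Lemma ncomps_under a b : ncomps (under a b) = ncomps a + ncomps b.
Proof. by elim: a => //= l _ r ->. Qed.

Lemma size_le_ncomps_under_seq u :
  ~~ has (pred1 Leaf) u -> size u <= ncomps (under_seq u).
Proof.
elim: u => //= a u IH; rewrite negb_or ncomps_under => /andP [Ha /IH].
by case: a Ha => //= l r _; lia.
Qed.

Fixpoint split_comps (k : nat) (t : tree) : seq tree :=
  match k, t with
  | 0, _ => [:: t]
  | k'.+1, Node l r => Node l Leaf :: split_comps k' r
  | k'.+1, Leaf => Leaf :: split_comps k' Leaf
  end.

Lemma under_seq_split_comps k t : under_seq (split_comps k t) = t.
Proof. by elim: k t => [|k IH] [|l r] //=; rewrite ?under_Leaf ?IH. Qed.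

Lemma size_split_comps k t : size (split_comps k t) = k.+1.
Proof. by elim: k t => [|k IH] [|l r] //=; rewrite IH. Qed.

Lemma split_comps_leafless k t : k < ncomps t -> ~~ has (pred1 Leaf) (split_comps k t).
Proof. by elim: k t => [|k IH] [|l r] //= H; rewrite IH. Qed.

Lemma all2_size (S T : Type) (r : S -> T -> bool) s t : all2 r s t -> size s = size t.
Proof. by elim: s t => [|a s IH] [|b t] //= /andP [_ /IH ->]. Qed.

Lemma all2_refl (T : Type) (r : rel T) : reflexive r -> forall s, all2 r s s.
Proof. by move=> r_refl; elim=> //= a s ->; rewrite r_refl. Qed.

Lemma all2_tam_le_leafless (w u : seq tree) :
  all2 tam_le w u -> ~~ has (pred1 Leaf) u -> ~~ has (pred1 Leaf) w.
Proof.
elim: w u => [|a w IH] [|b u] //= /andP [Hab Hwu]; rewrite !negb_or => /andP [Hb Hu].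
rewrite (IH _ Hwu Hu) andbT; apply: contra Hb => /eqP Ea.
by move: Hab; rewrite Ea => /tam_le_tsize; case: b.
Qed.

Definition tuple_weight (u : seq tree) : nat := sumn (map rot_weight u).

Lemma all2_tam_le_weight (w u : seq tree) :
  all2 tam_le w u -> w != u -> tuple_weight w < tuple_weight u.
Proof.
rewrite /tuple_weight; elim: w u => [|a w IH] [|b u] //= /andP [/tam_leP Hab Hwu] ne.
have := tamari_weight_le Hab; have [Ewu|newu] := eqVneq w u; last first.
  by have := IH _ Hwu newu; lia.
have neab : a <> b by move=> Eab; move: ne; rewrite Eab Ewu eqxx.
by have := tamari_weight Hab neab; rewrite Ewu; lia.
Qed.

Section MBasis.
Local Open Scope ring_scope.

(* The coefficient of [M_t] in [x], by Moebius inversion of [F_s = sum_(s <= t) M_t]. *)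
Definition Mcoord (x : tree -> rat) (t : tree) : rat :=
  \sum_(s <- trees (tsize t)) x s * (tam_le s t)%:R.

(* The dual form of [Delta^(k) M_t = sum_(t = u_0 \ ... \ u_k) M_(u_0) (x) ... (x) M_(u_k)]. *)
Lemma sum_delta_lower_tuples k (x : tree -> rat) u : size u = k.+1 ->
  \sum_(w <- lower_tuples u) delta k x w = Mcoord x (under_seq u).
Proof.
move=> Hu; rewrite /delta /Mcoord.
under eq_big_seq => w.
  rewrite mem_lower_tuples => Hw.
  have -> : sumn (map tsize w) = tsize (under_seq u).
    rewrite tsize_under_seq; elim: w u Hw {Hu} => [|b w IH] [|a u] //= /andP [Hba Hwu].
    by rewrite (tam_le_tsize Hba) (IH _ Hwu).
  over.
rewrite exchange_big /=; apply: eq_bigr => t _.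
rewrite -mulr_sumr -natr_sum sum_count_mem ?lower_tuples_uniq // -(count_deltaF t Hu).
by congr (_ * _%:R); apply: eq_count => w /=; rewrite mem_lower_tuples.
Qed.

Lemma Mbasis_mu t s : Mbasis t s = mu t s.
Proof.
rewrite /Mbasis; have [le|nle] := boolP (tam_le t s); last by rewrite andbF mu_notle.
by rewrite (tam_le_tsize le) eqxx.
Qed.

Lemma sum_trees_eq (x : tree -> rat) n a : tsize a = n ->
  \sum_(t <- trees n) x t * (t == a)%:R = x a.
Proof.
move=> Ha; rewrite (bigD1_seq a) ?trees_uniq ?mem_trees ?Ha //= eqxx mulr1 big1 ?addr0 //.
by move=> t /negbTE ->; rewrite mulr0.
Qed.

Lemma Mcoord_Mbasis t t' : Mcoord (Mbasis t) t' = (t == t')%:R.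
Proof.
rewrite /Mcoord; have [E|ne] := eqVneq (tsize t') (tsize t).
  by rewrite E -(mu_zeta E); apply: eq_bigr => s _; rewrite Mbasis_mu.
rewrite big1 => [|s _]; first by case: eqP => // Ett'; move: ne; rewrite Ett' eqxx.
rewrite Mbasis_mu; have [Hts|/mu_notle ->] := boolP (tam_le t s); last by rewrite mul0r.
have [Hst'|] := boolP (tam_le s t'); last by rewrite mulr0.
by move: ne; rewrite -(tam_le_tsize Hst') -(tam_le_tsize Hts) eqxx.
Qed.

Lemma sum_trees_upto N n (F : tree -> rat) : (n <= N)%N ->
  \sum_(t <- trees_upto N | tsize t == n) F t = \sum_(t <- trees n) F t.
Proof.
move=> HnN; rewrite -big_filter; apply/perm_big/uniq_perm.
- exact/filter_uniq/trees_upto_uniq.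
- exact: trees_uniq.
- by move=> t; rewrite mem_filter mem_trees_upto mem_trees; case: eqP => // ->.
Qed.

Lemma Mcoord_eq0 (x : tree -> rat) N :
  (forall t, (N < tsize t)%N -> x t = 0) -> forall t, (N < tsize t)%N -> Mcoord x t = 0.
Proof.
move=> HN t Ht; rewrite /Mcoord big1_seq // => s /andP [_].
by rewrite mem_trees => /eqP Hs; rewrite HN ?mul0r ?Hs.
Qed.

Lemma Mbasis_expansion (x : tree -> rat) N :
  (forall t, (N < tsize t)%N -> x t = 0) -> x =1 lincomb N (Mcoord x) Mbasis.
Proof.
move=> HN v; rewrite /lincomb (bigID (fun t => tsize t == tsize v)) /=.
rewrite [X in _ = _ + X]big1 ?addr0 => [|t ne]; last first.
  rewrite Mbasis_mu mu_notle ?mulr0 //.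
  by apply: contra ne => /tam_le_tsize ->.
have [Hv|Hv] := leqP (tsize v) N; last first.
  by rewrite big1_seq ?HN // => t /andP [/eqP E]; rewrite mem_trees_upto; lia.
rewrite sum_trees_upto //.
under eq_big_seq => t.
  rewrite mem_trees => /eqP Ht.
  rewrite /Mcoord Ht Mbasis_mu mulr_suml.
  under eq_bigr do rewrite -mulrA.
  over.
rewrite exchange_big /= -(sum_trees_eq x (erefl (tsize v))).
by apply: eq_big_seq => s; rewrite mem_trees => /eqP Hs; rewrite -mulr_sumr zeta_mu.
Qed.

Lemma Mbasis_free N c : (forall t, (N < tsize t)%N -> c t = 0) ->
  lincomb N c Mbasis =1 (fun _ => 0) -> forall t, c t = 0.
Proof.
move=> HN H0 t; have [Ht|] := leqP (tsize t) N; last exact: HN.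
have : Mcoord (lincomb N c Mbasis) t = 0 by rewrite /Mcoord big1 // => s _; rewrite H0 mul0r.
rewrite /Mcoord /lincomb.
under eq_bigr do rewrite mulr_suml.
rewrite exchange_big /=.
under eq_bigr do (under eq_bigr do rewrite -mulrA; rewrite -mulr_sumr -/(Mcoord _ t) Mcoord_Mbasis).
rewrite (bigD1_seq t) ?trees_upto_uniq ?mem_trees_upto //= eqxx mulr1 big1 ?addr0 //.
by move=> t' /negbTE ->; rewrite mulr0.
Qed.

(* For leafless [u] of size [k.+1] the sum of [Delta^(k) M_t] over the tuples below [u] is
   [(t == under_seq u)%:R = 0], and these tuples are leafless as well: induct on the weight. *)
Lemma Mbasis_in_coradical k t : (ncomps t <= k)%N -> in_coradical k (Mbasis t).
Proof.
move=> Hk; split.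
  exists (tsize t) => s Hs; rewrite /Mbasis; case: eqP => //= E; move: Hs; rewrite E; lia.
suff vanish m u : (tuple_weight u < m)%N -> size u = k.+1 -> ~~ has (pred1 Leaf) u ->
    delta k (Mbasis t) u = 0.
  by move=> u Hu; apply: contraR => Hl; apply/eqP/(vanish (tuple_weight u).+1).
elim: m u => [//|m IH] u Hm Hu Hl.
have := sum_delta_lower_tuples (Mbasis t) Hu; rewrite Mcoord_Mbasis.
have -> : (t == under_seq u) = false.
  by apply/negbTE/eqP => Etu; have := size_le_ncomps_under_seq Hl; rewrite -Etu Hu; lia.
rewrite (bigD1_seq u) ?lower_tuples_uniq ?mem_lower_tuples ?(all2_refl tam_le_refl) //=.
rewrite big1_seq ?addr0 // => w /andP [nwu]; rewrite mem_lower_tuples => Hw.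
apply: IH; first by have := all2_tam_le_weight Hw nwu; lia.
  by rewrite (all2_size Hw).
exact: all2_tam_le_leafless Hw Hl.
Qed.

Lemma Mcoord_coradical k x t : in_coradical k x -> Mcoord x t != 0 -> (ncomps t <= k)%N.
Proof.
case=> _ Hx; apply: contraR; rewrite -ltnNge => Hc.
have Hu := size_split_comps k t.
rewrite -(under_seq_split_comps k t) -(sum_delta_lower_tuples x Hu).
apply/eqP/big1_seq => w; rewrite mem_lower_tuples => Hw.
have Hl := all2_tam_le_leafless Hw (split_comps_leafless Hc).
apply/eqP; apply: contraNT Hl => Hd.
exact: Hx (etrans (all2_size Hw) Hu) Hd.
Qed.

Lemma coradical_basis k :
  is_basis (in_coradical k) (fun t => exists2 j, (j <= k)%N & in_Yk j t) Mbasis.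
Proof.
split.
- by move=> t [j Hj /in_YkP Hc]; apply: Mbasis_in_coradical; rewrite Hc.
- by move=> N c HN _; apply: Mbasis_free HN.
- move=> x Hx; have [[N HN] _] := Hx.
  exists N, (Mcoord x); split; [exact: Mcoord_eq0 | | exact: Mbasis_expansion].
  by move=> t Hct; exists (ncomps t); [exact: Mcoord_coradical Hx Hct | exact/in_YkP].
Qed.

Lemma count_deltaF1 t a b :
  count_mem [:: a; b] (deltaF 1 t) =
  count (fun p : tree * tree => (p.1 == a) && (p.2 == b)) (splits t).
Proof.
rewrite /= count_flatten -sumn_count -map_comp; congr sumn; apply/eq_map => p /=.
by rewrite addn0 !eqseq_cons andbT.
Qed.

Lemma delta1_Leafl (x : tree -> rat) b : delta 1 x [:: Leaf; b] = x b.
Proof.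
rewrite /delta /= add0n addn0 -(sum_trees_eq x (erefl (tsize b))).
apply: eq_bigr => t _; rewrite count_deltaF1 splitsE count_map.
rewrite (count_pred_at (j := 0)) ?iota_uniq //; last first.
  move=> i; rewrite mem_iota add0n => Hi /andP [/eqP H _].
  by have [|] := @tsize_split_at i t; rewrite ?H //; lia.
by rewrite mem_iota /= split_at0.
Qed.

Lemma delta1_Leafr (x : tree -> rat) a : delta 1 x [:: a; Leaf] = x a.
Proof.
rewrite /delta /= !addn0 -(sum_trees_eq x (erefl (tsize a))).
apply: eq_bigr => t _; rewrite count_deltaF1 splitsE count_map.
rewrite (count_pred_at (j := tsize t)) ?iota_uniq //; last first.
  move=> i; rewrite mem_iota add0n => Hi /andP [_ /eqP H].
  by have [|_] := @tsize_split_at i t; rewrite ?H /=; lia.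
by rewrite mem_iota /= split_at_tsize /= add0n ltnSn eqxx andbT.
Qed.

Lemma primitive_coradical x : primitive x <-> in_coradical 1 x /\ x Leaf = 0.
Proof.
split=> [[Hfs Hd]|[[Hfs Hx] x0]].
  have x0 : x Leaf = 0.
    by have := Hd Leaf Leaf; rewrite delta1_Leafl mulr1 mul1r -{1}[x Leaf]addr0 => /addrI.
  split=> //; split=> // -[|a [|b []]] // _; rewrite Hd.
  have [->|na] := eqVneq a Leaf; first by [].
  have [->|nb] := eqVneq b Leaf; first by rewrite /= orbT.
  by rewrite mulr0 mul0r addr0 eqxx.
split=> // a b; have [->|na] := eqVneq a Leaf.
  by rewrite delta1_Leafl x0 mul0r add0r mul1r.
have [->|nb] := eqVneq b Leaf; first by rewrite delta1_Leafr mulr1 mul0r addr0.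
rewrite mulr0 mul0r addr0; apply/eqP/(contraNT (Hx [:: a; b] erefl)).
by rewrite /= (negbTE na) (negbTE nb).
Qed.

Lemma primitive_basis : is_basis primitive (fun t => progressive t) Mbasis.
Proof.
split.
- move=> t Hp; apply/primitive_coradical; split.
    by apply: Mbasis_in_coradical; case: t Hp => // l [].
  by rewrite /Mbasis; case: t Hp.
- by move=> N c HN _; apply: Mbasis_free HN.
- move=> x /primitive_coradical [Hx x0]; have [[N HN] _] := Hx.
  exists N, (Mcoord x); split; [exact: Mcoord_eq0 | | exact: Mbasis_expansion].
  move=> t Hct; have := Mcoord_coradical Hx Hct.
  case: t Hct => [|l [|rl rr]] //=.
  by rewrite /Mcoord big_seq1 x0 mul0r eqxx.
Qed.

End MBasis.

Theorem corollary5p3 :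
  (forall k : nat,
     is_basis (in_coradical k) (fun t => exists2 j, (j <= k)%N & in_Yk j t) Mbasis)
  /\ is_basis primitive (fun t => progressive t) Mbasis.
Proof. by split; [exact: coradical_basis | exact: primitive_basis]. Qed.
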